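(* The image $\operatorname{Im}\sharp$ is contained in the even subalgebra $U(\mathfrak{sl}_2)_e$ and is a proper subalgebra of it; that is, $\operatorname{Im}\sharp\neq U(\mathfrak{sl}_2)_e$ and $\operatorname{Im}\sharp\neq\mathbb C\cdot 1$.
   Context: All algebras are unital associative over $\mathbb C$, $[x,y]=xy-yx$, $\mathbf i=\sqrt{-1}$. $U(\mathfrak{sl}_2)$ is generated by $E,F,H$ with $[H,E]=2E$, $[H,F]=-2F$, $[E,F]=H$. For $n\in\mathbb Z$ let $U_n$ be the span of all $E^iF^jH^k$ ($i,j,k\in\mathbb N$, $i-j=n$); this makes $U(\mathfrak{sl}_2)$ a $\mathbb Z$-graded algebra, and the even subalgebra is $U(\mathfrak{sl}_2)_e=\bigoplus_{n\in\mathbb Z}U_{2n}$. $\Re$ is generated by $A,B,C,\Delta$ with $[A,B]=[B,C]=[C,A]=2\Delta$ and such that $[A,\Delta]+AC-BA$, $[B,\Delta]+BA-CB$, $[C,\Delta]+CB-AC$ are central. $\sharp:\Re\to U(\mathfrak{sl}_2)$ is the unique algebra homomorphism with $A\mapsto \frac{(E+F-2)(E+F+2)}{16}$, $B\mapsto\frac{(H-2)(H+2)}{16}$, $C\mapsto\frac{(\mathbf iE-\mathbf iF-2)(\mathbf iE-\mathbf iF+2)}{16}$, $\Delta\mapsto\frac{(H+2)F^2-(H-2)E^2}{64}$. A subalgebra is proper if it is neither the whole algebra nor the subalgebra generated by the unit. *)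

From HB Require Import structures.
From mathcomp Require Import all_boot all_order all_algebra.
From mathcomp Require Import reals.
From mathcomp Require Export complex.
Set Implicit Arguments. Unset Strict Implicit. Unset Printing Implicit Defensive.
Import Order.TTheory GRing.Theory Num.Theory.
Local Open Scope ring_scope.

Section Defs.
Variable K : fieldType.

Definition comm {A : pzRingType} (x y : A) : A := x * y - y * x.

Definition central {A : pzRingType} (x : A) : Prop := forall y : A, x * y = y * x.

Inductive in_subalg_gen {A : algType K} (gens : seq A) : A -> Prop :=
| sg_gen x : x \in gens -> in_subalg_gen gens x
| sg_one : in_subalg_gen gens 1
| sg_add x y : in_subalg_gen gens x -> in_subalg_gen gens y -> in_subalg_gen gens (x + y)
| sg_scale (a : K) x : in_subalg_gen gens x -> in_subalg_gen gens (a *: x)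
| sg_mul x y : in_subalg_gen gens x -> in_subalg_gen gens y -> in_subalg_gen gens (x * y).

Definition pbw_mono {U : algType K} (E F H : U) (t : nat * nat * nat) : U :=
  E ^+ t.1.1 * F ^+ t.1.2 * H ^+ t.2.

(* (U, E, F, H) is (a model of) the universal enveloping algebra U(sl_2):
   the sl_2 relations hold and the PBW monomials E^i F^j H^k form a basis. *)
Definition is_Usl2 {U : algType K} (E F H : U) : Prop :=
  [/\ comm H E = 2%:R * E, comm H F = - (2%:R * F), comm E F = H,
      (forall (s : seq (nat * nat * nat)) (c : nat * nat * nat -> K),
          uniq s -> \sum_(t <- s) c t *: pbw_mono E F H t = 0 ->
          forall t, t \in s -> c t = 0) &
      (forall u : U, exists (s : seq (nat * nat * nat)) (c : nat * nat * nat -> K),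
          u = \sum_(t <- s) c t *: pbw_mono E F H t)].

Definition pbw_deg (t : nat * nat * nat) : int := (t.1.1)%:Z - (t.1.2)%:Z.

(* u lies in the even subalgebra U_e = (+)_n U_{2n}: u is a linear
   combination of PBW monomials E^i F^j H^k with i - j even. *)
Definition in_even_subalg {U : algType K} (E F H : U) (u : U) : Prop :=
  exists (s : seq (nat * nat * nat)) (c : nat * nat * nat -> K),
    all (fun t => (2 %| pbw_deg t)%Z) s /\
    u = \sum_(t <- s) c t *: pbw_mono E F H t.

Definition is_Re {R : algType K} (A B C D : R) : Prop :=
  [/\ comm A B = 2%:R * D, comm B C = 2%:R * D & comm C A = 2%:R * D] /\
  [/\ central (comm A D + A * C - B * A),
      central (comm B D + B * A - C * B) &
      central (comm C D + C * B - A * C)] /\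
  (forall x : R, in_subalg_gen [:: A; B; C; D] x).

End Defs.

From HB Require Import structures.
From mathcomp Require Import all_boot all_order all_algebra.
From mathcomp Require Import reals complex zify.
Set Implicit Arguments. Unset Strict Implicit. Unset Printing Implicit Defensive.
Import Order.TTheory GRing.Theory Num.Theory.
Local Open Scope ring_scope.

(* By the PBW theorem every triple (e, f, h) satisfying the sl2 relations in an
   algebra V extends to an algebra map U -> V sending E, F, H to e, f, h.  The
   triples (-E, -F, H) and (-F, -E, -H) give automorphisms θ and ω of U
   fixing the images of A, B, C, D, hence all of Im ♯.  Since θ multiplies
   E^i F^j H^k by (-1)^(i+j), its fixed points lie in U_e; ω sends H to -H,
   so the even element H is not in Im ♯; and ♯B = (H^2 - 4)/16 is not a scalar. *)

Section CommuteExpr.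
Variable V : pzRingType.

Lemma commr_expr_shift (X Y a : V) : X * Y = Y * X + Y * a -> Y * a = a * Y ->
  forall n, X * Y ^+ n = Y ^+ n * X + Y ^+ n * (a *+ n).
Proof.
move=> XY Ya; elim=> [|n IH]; first by rewrite !expr0 mulr1 mul1r mulr0n mulr0 addr0.
rewrite exprSr mulrA IH mulrDl -!mulrA XY mulrDr !mulrA -mulrA.
rewrite -[Y ^+ n * (a *+ n) * Y]mulrA mulrnAl -Ya -mulrnAr mulrA.
by rewrite [Y ^+ n * (Y * _)]mulrA -addrA -mulrDr mulrS.
Qed.

Lemma commr_expr_shift2 (X Y Z c : V) :
    X * Y = Y * X + Z -> Z * Y = Y * Z + Y * c -> Y * c = c * Y ->
  forall n, X * Y ^+ n.+1 = Y ^+ n.+1 * X + Y ^+ n * (Z *+ n.+1 + c *+ 'C(n.+1, 2)).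
Proof.
move=> XY ZY Yc; elim=> [|n IH].
  by rewrite expr1 expr0 mul1r bin_small // mulr0n addr0.
rewrite [Y ^+ n.+2]exprSr mulrA IH mulrDl -!mulrA XY mulrDr.
have shiftY : (Z *+ n.+1 + c *+ 'C(n.+1, 2)) * Y =
              Y * ((Z + c) *+ n.+1 + c *+ 'C(n.+1, 2)).
  by rewrite mulrDl !mulrnAl ZY -Yc mulrDr !mulrnAr mulrDr.
rewrite shiftY [Y ^+ n * (Y * _)]mulrA -exprSr -addrA -mulrDr; congr (_ + _ * _).
have -> : 'C(n.+2, 2) = (n.+1 + 'C(n.+1, 2))%N by rewrite binS bin1 addnC.
by move: ('C(n.+1, 2)) => m; rewrite mulrnDl mulrnDr [Z *+ n.+2]mulrS -!addrA.
Qed.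

End CommuteExpr.

Section PbwMonoUnits.
Variables (K : fieldType) (V : algType K) (a b c : V).

Lemma pbw_mono000 : pbw_mono a b c (0%N, 0%N, 0%N) = 1.
Proof. by rewrite /pbw_mono /= !expr0 !mulr1. Qed.

Lemma pbw_mono100 : pbw_mono a b c (1%N, 0%N, 0%N) = a.
Proof. by rewrite /pbw_mono /= expr1 !expr0 !mulr1. Qed.

Lemma pbw_mono010 : pbw_mono a b c (0%N, 1%N, 0%N) = b.
Proof. by rewrite /pbw_mono /= expr1 !expr0 mulr1 mul1r. Qed.

Lemma pbw_mono001 : pbw_mono a b c (0%N, 0%N, 1%N) = c.
Proof. by rewrite /pbw_mono /= expr1 !expr0 !mul1r. Qed.

End PbwMonoUnits.

Section Sl2Triple.
Variables (K : fieldType) (V : algType K).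

Definition sl2_triple (e f h : V) : Prop :=
  [/\ comm h e = 2%:R * e, comm h f = - (2%:R * f) & comm e f = h].

Lemma sl2_triple_neg e f h : sl2_triple e f h -> sl2_triple (- e) (- f) h.
Proof.
rewrite /sl2_triple /comm !mulrNN !mulrN !mulNr !opprK => -[he hf ef].
by split; rewrite // addrC -opprB ?he ?hf ?opprK.
Qed.

Lemma sl2_triple_swap e f h : sl2_triple e f h -> sl2_triple (- f) (- e) (- h).
Proof.
rewrite /sl2_triple /comm !mulrNN !mulrN => -[he hf ef].
by split; rewrite ?opprK // -ef opprB.
Qed.

Lemma Usl2_triple (E F H : V) : is_Usl2 E F H -> sl2_triple E F H.
Proof. by case. Qed.

Variables e f h : V.
Hypothesis sl2 : sl2_triple e f h.
Local Notation m := (pbw_mono e f h).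

Lemma sl2_mulHE : h * e = e * h + e * 2%:R.
Proof. by case: sl2; rewrite /comm => /eqP; rewrite subr_eq commr_nat addrC => /eqP. Qed.

Lemma sl2_mulHF : h * f = f * h + f * (- 2%:R).
Proof.
by case: sl2; rewrite /comm => _ /eqP; rewrite subr_eq mulrN commr_nat addrC => /eqP.
Qed.

Lemma sl2_mulFE : f * e = e * f - h.
Proof. by case: sl2; rewrite /comm => _ _ <-; rewrite opprB addrC subrK. Qed.

Lemma sl2_mulH_exprE i : h * e ^+ i = e ^+ i * h + e ^+ i * (2%:R *+ i).
Proof. by apply: commr_expr_shift; rewrite ?sl2_mulHE // commr_nat. Qed.

Lemma sl2_mulH_exprF j : h * f ^+ j = f ^+ j * h + f ^+ j * ((- 2%:R) *+ j).
Proof. by apply: commr_expr_shift; rewrite ?sl2_mulHF // mulrN mulNr commr_nat. Qed.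

Lemma sl2_mulF_exprSE n : f * e ^+ n.+1 =
  e ^+ n.+1 * f + e ^+ n * ((- h) *+ n.+1 + (- 2%:R) *+ 'C(n.+1, 2)).
Proof.
apply: commr_expr_shift2; first by rewrite sl2_mulFE.
- by rewrite mulNr sl2_mulHE opprD -!mulrN.
- by rewrite mulrN mulNr commr_nat.
Qed.

Lemma mulE_pbw_mono i j k : e * m (i, j, k) = m (i.+1, j, k).
Proof. by rewrite /pbw_mono /= !mulrA exprS. Qed.

Lemma mulH_pbw_mono i j k : h * m (i, j, k) =
  m (i, j, k.+1) + ((i * 2)%:R - (j * 2)%:R) *: m (i, j, k).
Proof.
rewrite /pbw_mono /= scalerBl !scaler_nat !mulrA sl2_mulH_exprE mulrDl mulrDl.
rewrite -[e ^+ i * h * f ^+ j]mulrA sl2_mulH_exprF mulrDr mulrDl !mulrA exprS !mulrA.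
rewrite mulNrn -!mulrnA mulrN mulNr -[e ^+ i * (2 * i)%:R * f ^+ j]mulrA.
rewrite -commr_nat mulrA !mulr_natr !mulrnAl (mulnC 2 i) (mulnC 2 j) -!addrA.
by congr (_ + _); exact: addrC.
Qed.

Lemma mulF_pbw_mono0 j k : f * m (0%N, j, k) = m (0%N, j.+1, k).
Proof. by rewrite /pbw_mono /= !expr0 !mul1r mulrA exprS. Qed.

Lemma mulF_pbw_monoS n j k : f * m (n.+1, j, k) =
  m (n.+1, j.+1, k) + ((- (n.+1)%:R) *: m (n, j, k.+1) +
    ((2 * j * n.+1)%:R - (2 * 'C(n.+1, 2))%:R) *: m (n, j, k)).
Proof.
rewrite /pbw_mono /= !mulrA sl2_mulF_exprSE mulrDl mulrDl.
rewrite -[e ^+ n.+1 * f * f ^+ j]mulrA -exprS; congr (_ + _).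
rewrite mulrDr !mulrDl !mulrnAr !mulrnAl !mulrN !mulNr.
rewrite -[e ^+ n * h * f ^+ j]mulrA sl2_mulH_exprF mulrDr mulrDl.
have -> : e ^+ n * (f ^+ j * h) * h ^+ k = e ^+ n * f ^+ j * h ^+ k.+1.
  by rewrite exprS !mulrA.
have -> : e ^+ n * (f ^+ j * ((- 2%:R) *+ j)) * h ^+ k =
          - ((e ^+ n * f ^+ j * h ^+ k) *+ (2 * j)).
  by rewrite mulNrn !mulrN mulNr mulrnAr mulr_natr -mulrnA mulrnAr mulrnAl.
have -> : e ^+ n * 2%:R * f ^+ j * h ^+ k = (e ^+ n * f ^+ j * h ^+ k) *+ 2.
  by rewrite mulr_natr !mulrnAl.
rewrite scalerBl !scaler_nat scaleNr scaler_nat opprB mulrnBl mulNrn -!mulrnA.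
by rewrite -addrA [RHS]addrCA.
Qed.

End Sl2Triple.

Section BasisExtension.
Variables (K : fieldType) (I : choiceType).

Definition lincomb (W : lmodType K) (G : I -> W) (l : seq (I * K)) : W :=
  \sum_(p <- l) p.2 *: G p.1.

Definition lincomb_coef (l : seq (I * K)) (i : I) : K := \sum_(p <- l | p.1 == i) p.2.

Section Lincomb.
Variables (W : lmodType K) (G : I -> W).

Lemma lincomb_cat l l' : lincomb G (l ++ l') = lincomb G l + lincomb G l'.
Proof. exact: big_cat. Qed.

Lemma lincombZ a l :
  lincomb G [seq (p.1, a * p.2) | p <- l] = a *: lincomb G l.
Proof.
by rewrite /lincomb big_map scaler_sumr; apply: eq_bigr => p _; rewrite scalerA.
Qed.

Lemma lincomb1 i : lincomb G [:: (i, 1)] = G i.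
Proof. by rewrite /lincomb big_seq1 scale1r. Qed.

Lemma lincomb_collect l (r : seq I) : uniq r -> {subset map fst l <= r} ->
  lincomb G l = \sum_(i <- r) lincomb_coef l i *: G i.
Proof.
move=> r_uniq; elim: l => [|q l IH] l_sub.
  by rewrite /lincomb big_nil big1 // => i _; rewrite /lincomb_coef big_nil scale0r.
have q_r : q.1 \in r by apply: l_sub; rewrite inE eqxx.
rewrite /lincomb big_cons -/(lincomb G l) IH; last first.
  by move=> x x_l; apply: l_sub; rewrite inE x_l orbT.
rewrite [RHS](eq_bigr (fun i => (if q.1 == i then q.2 else 0) *: G i +
                          lincomb_coef l i *: G i)); last first.
  move=> i _; rewrite /lincomb_coef big_cons.
  by case: ifP; rewrite ?scalerDl // scale0r add0r.
rewrite big_split /=; congr (_ + _).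
rewrite (bigD1_seq q.1) //= eqxx big1 ?addr0 // => i /negbTE.
by rewrite eq_sym => ->; rewrite scale0r.
Qed.

End Lincomb.

Lemma eq_lincomb (W : lmodType K) (G G' : I -> W) : G =1 G' -> lincomb G =1 lincomb G'.
Proof. by move=> GG' l; apply: eq_bigr => p _; rewrite GG'. Qed.

Variables (U : lmodType K) (b : I -> U).
Hypothesis b_free : forall (s : seq I) (c : I -> K), uniq s ->
  \sum_(i <- s) c i *: b i = 0 -> forall i, i \in s -> c i = 0.
Hypothesis b_span : forall u : U,
  exists (s : seq I) (c : I -> K), u = \sum_(i <- s) c i *: b i.

Lemma lincomb_spanning u : exists l, u == lincomb b l.
Proof.
have [s [c ->]] := b_span u.
by exists [seq (i, c i) | i <- s]; rewrite /lincomb big_map.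
Qed.

Lemma lincomb_transfer (W : lmodType K) (G : I -> W) l l' :
  lincomb b l = lincomb b l' -> lincomb G l = lincomb G l'.
Proof.
move=> bll'; set r := undup (map fst (l ++ l')).
have r_uniq : uniq r := undup_uniq _.
have l_r : {subset map fst l <= r}.
  by move=> x x_l; rewrite mem_undup map_cat mem_cat x_l.
have l'_r : {subset map fst l' <= r}.
  by move=> x x_l'; rewrite mem_undup map_cat mem_cat x_l' orbT.
have coef_eq i : i \in r -> lincomb_coef l i = lincomb_coef l' i.
  move=> i_r; apply/eqP; rewrite -subr_eq0; apply/eqP.
  apply: (b_free (c := fun i => lincomb_coef l i - lincomb_coef l' i) r_uniq _ i_r).
  under eq_bigr => x _ do rewrite scalerBl.
  by rewrite sumrB -(lincomb_collect _ r_uniq l_r) -(lincomb_collect _ r_uniq l'_r) bll' subrr.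
rewrite (lincomb_collect _ r_uniq l_r) (lincomb_collect _ r_uniq l'_r).
by apply: eq_big_seq => i /coef_eq ->.
Qed.

Definition basis_coords (u : U) : seq (I * K) := xchoose (lincomb_spanning u).

Lemma basis_coordsP u : u = lincomb b (basis_coords u).
Proof. exact/eqP/(xchooseP (lincomb_spanning u)). Qed.

Section Extension.
Variables (W : lmodType K) (G : I -> W).

Definition basis_ext (u : U) : W := lincomb G (basis_coords u).

Lemma basis_ext_lincomb l : basis_ext (lincomb b l) = lincomb G l.
Proof. by apply: lincomb_transfer; rewrite -basis_coordsP. Qed.

Lemma basis_ext_basis i : basis_ext (b i) = G i.
Proof. by rewrite -(lincomb1 b) basis_ext_lincomb lincomb1. Qed.

Lemma basis_ext_is_linear : linear basis_ext.
Proof.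
move=> a u v; rewrite {1}(basis_coordsP u) {1}(basis_coordsP v).
by rewrite -(lincombZ b) -lincomb_cat basis_ext_lincomb lincomb_cat lincombZ.
Qed.

End Extension.

Lemma basis_ext_fixed (s : I -> K) u :
    basis_ext (fun i => s i *: b i) u = u ->
  exists (r : seq I) (c : I -> K),
    all (fun i => s i == 1) r /\ u = \sum_(i <- r) c i *: b i.
Proof.
move=> fixed_u; set l := basis_coords u; set r := undup (map fst l).
have ext_u : lincomb (fun i => s i *: b i) l = u := fixed_u.
have r_uniq : uniq r := undup_uniq _.
have l_r : {subset map fst l <= r} by move=> x; rewrite mem_undup.
have u_r : u = \sum_(i <- r) lincomb_coef l i *: b i.
  by rewrite {1}(basis_coordsP u) (lincomb_collect _ r_uniq l_r).
have coef0 i : i \in r -> s i != 1 -> lincomb_coef l i = 0.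
  move=> i_r si1.
  have sum0 : \sum_(x <- r) (lincomb_coef l x * (s x - 1)) *: b x = 0.
    under eq_bigr => x _ do rewrite mulrBr mulr1 scalerBl -scalerA.
    by rewrite sumrB -u_r -(lincomb_collect _ r_uniq l_r) ext_u subrr.
  have /eqP := b_free r_uniq sum0 i_r.
  by rewrite mulf_eq0 subr_eq0 (negbTE si1) orbF => /eqP.
exists [seq i <- r | s i == 1], (lincomb_coef l); split; first exact: filter_all.
rewrite big_filter big_mkcond {1}u_r; apply: eq_big_seq => i i_r /=.
by case: eqP => [//|/eqP /(coef0 i i_r) ->]; rewrite scale0r.
Qed.

End BasisExtension.

Section Sl2Lift.
Variables (K : fieldType) (U V : algType K) (E F H : U) (e f h : V).
Hypothesis HU : is_Usl2 E F H.
Hypothesis sl2 : sl2_triple e f h.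
Local Notation M := (pbw_mono E F H).
Local Notation m := (pbw_mono e f h).

Lemma pbw_mono_free (s : seq (nat * nat * nat)) (c : nat * nat * nat -> K) :
  uniq s -> \sum_(t <- s) c t *: M t = 0 -> forall t, t \in s -> c t = 0.
Proof. by case: HU => _ _ _ free _; apply: free. Qed.

Lemma pbw_mono_span u : exists s c, u = \sum_(t <- s) c t *: M t.
Proof. by case: HU => _ _ _ _; apply. Qed.

Definition sl2_lift : U -> V := basis_ext pbw_mono_span m.
HB.instance Definition _ :=
  GRing.isLinear.Build K U V *:%R sl2_lift (basis_ext_is_linear pbw_mono_free _ m).

Lemma sl2_lift_pbw_mono t : sl2_lift (M t) = m t.
Proof. exact: (basis_ext_basis pbw_mono_free pbw_mono_span m t). Qed.

Lemma sl2_lift_lincomb l : sl2_lift (lincomb M l) = lincomb m l.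
Proof. exact: (basis_ext_lincomb pbw_mono_free). Qed.

Lemma sl2_lift_mul_left (X : U) (x : V) : (forall t, sl2_lift (X * M t) = x * m t) ->
  forall u, sl2_lift (X * u) = x * sl2_lift u.
Proof.
move=> mulX u; rewrite (basis_coordsP pbw_mono_span u).
rewrite [in RHS]sl2_lift_lincomb /lincomb !mulr_sumr linear_sum.
by apply: eq_bigr => p _; rewrite -!scalerAr linearZZ /= mulX.
Qed.

Lemma sl2_lift_mulE u : sl2_lift (E * u) = e * sl2_lift u.
Proof.
by apply: sl2_lift_mul_left => -[[i j] k]; rewrite !mulE_pbw_mono sl2_lift_pbw_mono.
Qed.

Lemma sl2_lift_mulH u : sl2_lift (H * u) = h * sl2_lift u.
Proof.
apply: sl2_lift_mul_left => -[[i j] k].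
by rewrite (mulH_pbw_mono (Usl2_triple HU)) (mulH_pbw_mono sl2) linearD linearZZ /=
  !sl2_lift_pbw_mono.
Qed.

Lemma sl2_lift_mulF u : sl2_lift (F * u) = f * sl2_lift u.
Proof.
apply: sl2_lift_mul_left => -[[[|n] j] k].
  by rewrite !mulF_pbw_mono0 sl2_lift_pbw_mono.
by rewrite (mulF_pbw_monoS (Usl2_triple HU)) (mulF_pbw_monoS sl2) !linearD !linearZZ /=
  !sl2_lift_pbw_mono.
Qed.

Lemma sl2_lift_pbw_mono_mul t u : sl2_lift (M t * u) = m t * sl2_lift u.
Proof.
have mulXn (X : U) (x : V) : (forall u, sl2_lift (X * u) = x * sl2_lift u) ->
    forall n u, sl2_lift (X ^+ n * u) = x ^+ n * sl2_lift u.
  move=> mulX; elim=> [|n IH] {}u; first by rewrite !expr0 !mul1r.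
  by rewrite exprS -mulrA mulX IH mulrA -exprS.
case: t => [[i j] k]; rewrite /pbw_mono /= -!mulrA.
by rewrite (mulXn _ _ sl2_lift_mulE) (mulXn _ _ sl2_lift_mulF) (mulXn _ _ sl2_lift_mulH).
Qed.

Lemma sl2_liftM : {morph sl2_lift : x y / x * y}.
Proof.
move=> x y; rewrite (basis_coordsP pbw_mono_span x) sl2_lift_lincomb.
rewrite /lincomb !mulr_suml linear_sum; apply: eq_bigr => p _ /=.
by rewrite -!scalerAl linearZZ /= sl2_lift_pbw_mono_mul.
Qed.

Lemma sl2_lift1 : sl2_lift 1 = 1.
Proof. by rewrite -(pbw_mono000 E F H) sl2_lift_pbw_mono pbw_mono000. Qed.

HB.instance Definition _ :=
  GRing.isMonoidMorphism.Build U V sl2_lift (sl2_lift1, sl2_liftM).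

Definition sl2_hom : {lrmorphism U -> V} := sl2_lift.

Lemma sl2_homE : sl2_hom E = e.
Proof. by rewrite -{1}(pbw_mono100 E F H) /= sl2_lift_pbw_mono pbw_mono100. Qed.

Lemma sl2_homF : sl2_hom F = f.
Proof. by rewrite -{1}(pbw_mono010 E F H) /= sl2_lift_pbw_mono pbw_mono010. Qed.

Lemma sl2_homH : sl2_hom H = h.
Proof. by rewrite -{1}(pbw_mono001 E F H) /= sl2_lift_pbw_mono pbw_mono001. Qed.

End Sl2Lift.

Section EvenPart.
Variables (K : numFieldType) (U : algType K) (E F H : U).
Hypothesis HU : is_Usl2 E F H.
Local Notation M := (pbw_mono E F H).

Lemma exprN_scale (x : U) n : (- x) ^+ n = ((-1) ^+ n : K) *: x ^+ n.
Proof.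
elim: n => [|n IH]; first by rewrite !expr0 scale1r.
by rewrite !exprS IH -scalerAr mulN1r mulNr scalerN scaleNr.
Qed.

Lemma pbw_mono_neg t :
  pbw_mono (- E) (- F) H t = ((-1) ^+ (t.1.1 + t.1.2) : K) *: M t.
Proof.
rewrite /pbw_mono !exprN_scale -scalerAl -scalerAr scalerA -exprD.
by rewrite -scalerAl.
Qed.

Lemma sign_eq1_even n : ((-1) ^+ n == 1 :> K) = ~~ odd n.
Proof. by rewrite -signr_odd; case: (odd n); rewrite ?eqxx // expr1 eqNr oner_eq0. Qed.

Lemma even_of_neg_fixed u :
  sl2_hom HU (sl2_triple_neg (Usl2_triple HU)) u = u -> in_even_subalg E F H u.
Proof.
move=> fixed_u.
have := basis_ext_fixed (pbw_mono_free HU)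
  (s := fun t => (-1) ^+ (t.1.1 + t.1.2)) (b_span := pbw_mono_span HU) (u := u).
case=> [|r [c [r_even ->]]].
  by rewrite -[RHS]fixed_u /= /sl2_lift /basis_ext (eq_lincomb pbw_mono_neg).
exists r, c; split => //; apply: sub_all r_even => -[[i j] k] /=.
by rewrite sign_eq1_even /pbw_deg /=; lia.
Qed.

Lemma Usl2_oppH_neq : - H <> H.
Proof.
move=> /eqP; rewrite eq_sym -subr_eq0 opprK => /eqP HH0.
have sum0 : \sum_(t <- [:: (0, 0, 1)%N]) (fun=> 2%:R : K) t *: M t = 0.
  by rewrite big_seq1 pbw_mono001 scaler_nat mulr2n.
have /eqP := pbw_mono_free HU (s := [:: (0, 0, 1)%N]) isT sum0 (mem_head _ _).
by rewrite pnatr_eq0.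
Qed.

Lemma Usl2_even_H : in_even_subalg E F H H.
Proof.
by exists [:: (0, 0, 1)%N], (fun=> 1); rewrite big_seq1 scale1r pbw_mono001.
Qed.

End EvenPart.

Lemma lrmorph_fixed_subalg_gen (K : fieldType) (A B : algType K) (gens : seq A)
    (f : {lrmorphism A -> B}) (psi : {lrmorphism B -> B}) :
    {in gens, forall x, psi (f x) = f x} ->
  forall x, in_subalg_gen gens x -> psi (f x) = f x.
Proof.
move=> fixed_gens x; elim=> {x} [x /fixed_gens //| | x y _ fx _ fy | a x _ fx | x y _ fx _ fy].
- by rewrite !rmorph1.
- by rewrite !rmorphD /= fx fy.
- by rewrite !linearZ /= fx.
- by rewrite !rmorphM /= fx fy.
Qed.

Section SharpGenerators.
Local Open Scope complex_scope.
Variables (R : rcfType) (V : algType R[i]).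

(* The images of A, B, C, D under ♯, as functions of the sl2-triple, so that
   they can be transported along the maps [sl2_hom]. *)
Definition sharpA (e f : V) : V :=
  (16%:R : R[i])^-1 *: ((e + f - 2%:R) * (e + f + 2%:R)).
Definition sharpB (h : V) : V := (16%:R : R[i])^-1 *: ((h - 2%:R) * (h + 2%:R)).
Definition sharpC (e f : V) : V :=
  (16%:R : R[i])^-1 *: (('i *: e - 'i *: f - 2%:R) * ('i *: e - 'i *: f + 2%:R)).
Definition sharpD (e f h : V) : V :=
  (64%:R : R[i])^-1 *: ((h + 2%:R) * f ^+ 2 - (h - 2%:R) * e ^+ 2).

Lemma oppr_sub_add_nat (x : V) n :
  (- x - n%:R) * (- x + n%:R) = (x - n%:R) * (x + n%:R).
Proof.
have -> : - x + n%:R = - (x - n%:R) by rewrite opprB addrC.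
rewrite -opprD mulrNN; apply: commrB; last exact: commr_nat.
exact: esym (commrD (commr_refl x) (commr_nat x n)).
Qed.

Lemma mul_sub_add_nat (x : V) n :
  (x - n%:R) * (x + n%:R) = x ^+ 2 - (n * n)%:R.
Proof. by rewrite mulrBl !mulrDr commr_nat opprD addrA addrK -expr2 natrM. Qed.

Lemma sharpA_neg e f : sharpA (- e) (- f) = sharpA e f.
Proof. by rewrite /sharpA -opprD oppr_sub_add_nat. Qed.

Lemma sharpA_swap e f : sharpA (- f) (- e) = sharpA e f.
Proof. by rewrite /sharpA -opprD [f + e]addrC oppr_sub_add_nat. Qed.

Lemma sharpB_opp h : sharpB (- h) = sharpB h.
Proof. by rewrite /sharpB oppr_sub_add_nat. Qed.

Lemma sharpC_neg e f : sharpC (- e) (- f) = sharpC e f.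
Proof.
rewrite /sharpC !scalerN.
have -> : - ('i *: e) - - ('i *: f) = - ('i *: e - 'i *: f).
  by rewrite opprB opprK addrC.
by rewrite oppr_sub_add_nat.
Qed.

Lemma sharpC_swap e f : sharpC (- f) (- e) = sharpC e f.
Proof. by rewrite /sharpC !scalerN !opprK [- ('i *: f) + _]addrC. Qed.

Lemma sharpD_neg e f h : sharpD (- e) (- f) h = sharpD e f h.
Proof. by rewrite /sharpD !sqrrN. Qed.

Lemma sharpD_swap e f h : sharpD (- f) (- e) (- h) = sharpD e f h.
Proof.
rewrite /sharpD !sqrrN.
have -> : - h + 2%:R = - (h - 2%:R) by rewrite opprB addrC.
by rewrite -opprD !mulNr opprK addrC.
Qed.

End SharpGenerators.

Section RmorphSharp.
Local Open Scope complex_scope.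
Variables (R : rcfType) (V W : algType R[i]) (psi : {lrmorphism V -> W}).

Lemma rmorph_sub_add_nat x n :
  psi ((x - n%:R) * (x + n%:R)) = (psi x - n%:R) * (psi x + n%:R).
Proof. by rewrite rmorphM /= rmorphB /= rmorphD /= rmorph_nat. Qed.

Lemma rmorph_sharpA e f : psi (sharpA e f) = sharpA (psi e) (psi f).
Proof. by rewrite /sharpA linearZ /= rmorph_sub_add_nat rmorphD. Qed.

Lemma rmorph_sharpB h : psi (sharpB h) = sharpB (psi h).
Proof. by rewrite /sharpB linearZ /= rmorph_sub_add_nat. Qed.

Lemma rmorph_sharpC e f : psi (sharpC e f) = sharpC (psi e) (psi f).
Proof. by rewrite /sharpC linearZ /= rmorph_sub_add_nat rmorphB /= !linearZ. Qed.

Lemma rmorph_sharpD e f h : psi (sharpD e f h) = sharpD (psi e) (psi f) (psi h).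
Proof.
rewrite /sharpD linearZ /= rmorphB /= !rmorphM /= rmorphD rmorphB /=.
by rewrite rmorph_nat -!expr2.
Qed.

End RmorphSharp.

Section ImageOfSharp.
Local Open Scope complex_scope.
Variables (R : rcfType) (U Re : algType R[i]) (E F H : U) (A B C D : Re).
Hypothesis HU : is_Usl2 E F H.
Local Notation M := (pbw_mono E F H).

Lemma Usl2_sharpB_nonscalar : ~ exists a : R[i], sharpB H = a%:A.
Proof.
case=> a sharpB_a.
pose c t : R[i] := if t == (0, 0, 2)%N then 16%:R^-1 else - (a + 16%:R^-1 * 4%:R).
have H2 : (16%:R : R[i])^-1 *: H ^+ 2 = (a + 16%:R^-1 * 4%:R)%:A.
  move: sharpB_a; rewrite /sharpB mul_sub_add_nat scalerBr => /eqP.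
  by rewrite subr_eq => /eqP ->; rewrite scalerDl -scalerA scaler_nat.
have sum0 : \sum_(t <- [:: (0, 0, 2); (0, 0, 0)]%N) c t *: M t = 0.
  rewrite !big_cons big_nil addr0 /c /= pbw_mono000 /pbw_mono /= !expr0 !mul1r.
  by rewrite H2 scaleNr subrr.
have := pbw_mono_free HU (s := [:: (0, 0, 2); (0, 0, 0)]%N) isT sum0 (mem_head _ _).
by rewrite /c eqxx => /eqP; rewrite invr_eq0 pnatr_eq0.
Qed.

Hypothesis gen : forall x, in_subalg_gen [:: A; B; C; D] x.
Variable sharp : {lrmorphism Re -> U}.
Hypotheses (hA : sharp A = sharpA E F) (hB : sharp B = sharpB H)
  (hC : sharp C = sharpC E F) (hD : sharp D = sharpD E F H).

Lemma sharp_fixed (psi : {lrmorphism U -> U}) :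
    sharpA (psi E) (psi F) = sharpA E F -> sharpB (psi H) = sharpB H ->
    sharpC (psi E) (psi F) = sharpC E F ->
    sharpD (psi E) (psi F) (psi H) = sharpD E F H ->
  forall r, psi (sharp r) = sharp r.
Proof.
move=> fixA fixB fixC fixD r; apply: lrmorph_fixed_subalg_gen (gen r) => x.
rewrite !inE => /or4P[]/eqP->.
- by rewrite hA rmorph_sharpA.
- by rewrite hB rmorph_sharpB.
- by rewrite hC rmorph_sharpC.
- by rewrite hD rmorph_sharpD.
Qed.

Lemma sharp_neg_fixed r :
  sl2_hom HU (sl2_triple_neg (Usl2_triple HU)) (sharp r) = sharp r.
Proof.
by apply: sharp_fixed; rewrite ?sl2_homE ?sl2_homF ?sl2_homH
  ?sharpA_neg ?sharpC_neg ?sharpD_neg.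
Qed.

Lemma sharp_swap_fixed r :
  sl2_hom HU (sl2_triple_swap (Usl2_triple HU)) (sharp r) = sharp r.
Proof.
by apply: sharp_fixed; rewrite ?sl2_homE ?sl2_homF ?sl2_homH
  ?sharpA_swap ?sharpB_opp ?sharpC_swap ?sharpD_swap.
Qed.

End ImageOfSharp.

Unset Implicit Arguments.
Set Strict Implicit.
Local Open Scope complex_scope.

Theorem theorem7p8 (R : realType)
  (U : algType R[i]) (E F H : U) (HU : is_Usl2 E F H)
  (Re : algType R[i]) (A B C D : Re) (HRe : is_Re A B C D)
  (sharp : {lrmorphism Re -> U})
  (hA : sharp A = (16%:R)^-1 *: ((E + F - 2%:R) * (E + F + 2%:R)))
  (hB : sharp B = (16%:R)^-1 *: ((H - 2%:R) * (H + 2%:R)))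
  (hC : sharp C = (16%:R)^-1 *:
                    (('i *: E - 'i *: F - 2%:R) * ('i *: E - 'i *: F + 2%:R)))
  (hD : sharp D = (64%:R)^-1 *: ((H + 2%:R) * F ^+ 2 - (H - 2%:R) * E ^+ 2)) :
  let in_Im (u : U) := exists r : Re, u = sharp r in
  [/\ (forall u, in_Im u -> in_even_subalg E F H u),
      (exists u, in_even_subalg E F H u /\ ~ in_Im u) &
      (exists u, in_Im u /\ ~ (exists a : R[i], u = a%:A))].
Proof.
move=> in_Im; have [_ [_ gen]] := HRe.
have neg_fixed := sharp_neg_fixed HU gen hA hB hC hD.
have swap_fixed := sharp_swap_fixed HU gen hA hB hC hD.
split.
- by move=> _ [r ->]; apply: even_of_neg_fixed; exact: neg_fixed.
- exists H; split; first exact: Usl2_even_H.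
  case=> r Hr; apply: (Usl2_oppH_neq HU).
  by have := swap_fixed r; rewrite -Hr sl2_homH.
- exists (sharp B); split; first by exists B.
  rewrite hB; exact: (Usl2_sharpB_nonscalar HU).
Qed.
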